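(* Fix $p\in(0,1)$ and consider the Alternating Path Randomized Design. Let $\mathcal{P}_i=(v_{i,1},\dots,v_{i,k(i)+1})$ be a component and write $y_j=Y_{v_{i,j},v_{i,j+1}}$ for $j=1,\dots,k(i)$. If $\mathcal{P}_i$ is a path ($v_{i,k(i)+1}\neq v_{i,1}$), then \[\mathrm{Var}(\hat\Gamma_i)=\frac1p\sum_{j=1}^{k(i)}y_j^2+2\sum_{1\le j<q\le k(i)}p^{q-j-1}y_jy_q.\] If $\mathcal{P}_i$ is a cycle, then, with $k=k(i)$, \[\mathrm{Var}(\hat\Gamma_i)=\frac1p\sum_{j=1}^{k-1}y_j^2+2\sum_{1\le j<q\le k-1}p^{q-j-1}y_jy_q+\frac{p^2+2p-p^{k-1}}{1+p^{k-1}}\,y_k^2+2\sum_{j=1}^{k-1}(-1)^j\Big(\frac{(1-(-p)^{k-1-j})(1-(-p)^{j-1})}{1+p^{k-1}}-1\Big)y_jy_k.\]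
   Context: Setting: $2N$ agents; $\mathbb{M}^t,\mathbb{M}^c$ are one-to-one matchings (sets of unordered pairs of distinct agents, each agent in at most one pair); each pair $(a,b)$ has a fixed real potential outcome $Y_{a,b}$. The disagreement set $\triangle\mathbb{M}^{(t,c)}=(\mathbb{M}^t\cup\mathbb{M}^c)\setminus(\mathbb{M}^t\cap\mathbb{M}^c)$, viewed as a graph, has connected components $\mathcal{P}_1,\dots,\mathcal{P}_m$, each an alternating path or cycle: a sequence $(v_{i,1},\dots,v_{i,k(i)+1})$ whose consecutive pairs $e_{i,j}=(v_{i,j},v_{i,j+1})$, $j=1,\dots,k(i)$, are its edges, alternating between $\triangle\mathbb{M}^{(t,c)}_t=\triangle\mathbb{M}^{(t,c)}\cap\mathbb{M}^t$ and $\triangle\mathbb{M}^{(t,c)}_c=\triangle\mathbb{M}^{(t,c)}\cap\mathbb{M}^c$; a cycle if $v_{i,1}=v_{i,k(i)+1}$, a path otherwise. Alternating Path Randomized Design with parameter $p$: indicators $W_{i,j}\in\{0,1\}$, independent across components; within $\mathcal{P}_i$, $\mathbb{P}(W_{i,1}=1)=p/(1+p)$; for $2\le j\le k(i)$ (path) or $2\le j\le k(i)-1$ (cycle), conditionally on $W_{i,1},\dots,W_{i,j-1}$, $W_{i,j}=1$ with probability $p$ if $W_{i,j-1}=0$ and $W_{i,j}=0$ if $W_{i,j-1}=1$; for a cycle, $W_{i,k(i)}=1$ iff $W_{i,1}=W_{i,k(i)-1}=0$. Path-level Horvitz–Thompson estimator: $\hat\Gamma_i=\sum_{j:\,e_{i,j}\in\triangle\mathbb{M}^{(t,c)}_t}\frac{W_{i,j}Y_{e_{i,j}}}{\mathbb{P}(W_{i,j}=1)}-\sum_{j:\,e_{i,j}\in\triangle\mathbb{M}^{(t,c)}_c}\frac{W_{i,j}Y_{e_{i,j}}}{\mathbb{P}(W_{i,j}=1)}$.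 *)

From mathcomp Require Import all_boot all_order all_algebra.
Set Implicit Arguments. Unset Strict Implicit. Unset Printing Implicit Defensive.
Import Order.TTheory GRing.Theory Num.Theory.
Local Open Scope ring_scope.

Definition is_matching (A : finType) (M : {set {set A}}) : Prop :=
  (forall e, e \in M -> #|e| = 2%N) /\
  (forall e f, e \in M -> f \in M -> e != f -> [disjoint e & f]).

Definition disagree (A : finType) (Mt Mc : {set {set A}}) : {set {set A}} :=
  (Mt :|: Mc) :\: (Mt :&: Mc).

(* 1-based indexing as in the paper: vertices v 1, ..., v (k+1);
   edge j = (v j, v (j+1)) for j = 1..k. *)
Definition edge (A : finType) (v : nat -> A) (j : nat) : {set A} :=
  [set v j; v j.+1].

(* (v 1, ..., v (k+1)) is a connected component of the disagreement graph,
   traversed as an alternating path or cycle. *)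
Definition alt_component (A : finType) (Mt Mc : {set {set A}}) (k : nat)
    (v : nat -> A) : Prop :=
  [/\ (0 < k)%N,
      (forall j, (1 <= j <= k)%N -> edge v j \in disagree Mt Mc),
      (forall j, (1 <= j < k)%N ->
          (edge v j \in Mt) = (edge v j.+1 \in Mc)),
      (forall i j, (1 <= i)%N -> (i < j)%N -> (j <= k.+1)%N -> v i = v j ->
          i = 1%N /\ j = k.+1)
    & (forall e, e \in disagree Mt Mc ->
          (exists2 j, (1 <= j <= k.+1)%N & v j \in e) ->
          exists2 j, (1 <= j <= k)%N & e = edge v j)].


(* W_j (1-based) read off an assignment w : {ffun 'I_k -> bool}; w i is W_(i+1). *)
Definition wv (k : nat) (w : {ffun 'I_k -> bool}) (j : nat) : bool :=
  if insub j.-1 is Some i then w i else false.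

Definition init_pr {R : realFieldType} (p : R) (b : bool) : R := if b then p / (1 + p) else 1 / (1 + p).

(* P(W_j = b | W_(j-1) = a) *)
Definition trans_pr {R : realFieldType} (p : R) (a b : bool) : R :=
  if a then (if b then 0 else 1) else (if b then p else 1 - p).

(* joint law of (W_1, ..., W_k) under the Alternating Path Randomized Design
   on a path (cyc = false) or a cycle (cyc = true) with k edges *)
Definition design_pmf {R : realFieldType} (p : R) (k : nat) (cyc : bool) (w : {ffun 'I_k -> bool}) : R :=
  if cyc then
    init_pr p (wv w 1) *
    (\prod_(2 <= j < k) trans_pr p (wv w j.-1) (wv w j)) *
    (if wv w k == (~~ wv w 1 && ~~ wv w k.-1) then 1 else 0)
  else
    init_pr p (wv w 1) *
    \prod_(2 <= j < k.+1) trans_pr p (wv w j.-1) (wv w j).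
Arguments design_pmf {R} p k cyc.

Definition Expect {R : realFieldType} (p : R) (k : nat) (cyc : bool) (X : {ffun 'I_k -> bool} -> R) : R :=
  \sum_(w : {ffun 'I_k -> bool}) design_pmf p k cyc w * X w.
Arguments Expect {R} p k cyc X.

Definition Var {R : realFieldType} (p : R) (k : nat) (cyc : bool) (X : {ffun 'I_k -> bool} -> R) : R :=
  Expect p k cyc (fun w => X w ^+ 2) - (Expect p k cyc X) ^+ 2.
Arguments Var {R} p k cyc X.

Definition probW1 {R : realFieldType} (p : R) (k : nat) (cyc : bool) (j : nat) : R :=
  Expect p k cyc (fun w => (wv w j)%:R).
Arguments probW1 {R} p k cyc j.

Definition HT {R : realFieldType} (A : finType) (Mt Mc : {set {set A}}) (Y : {set A} -> R)
    (v : nat -> A) (p : R) (k : nat) (cyc : bool) (w : {ffun 'I_k -> bool}) : R :=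
  \sum_(1 <= j < k.+1)
     ((if edge v j \in disagree Mt Mc :&: Mt then 1 else 0)
      - (if edge v j \in disagree Mt Mc :&: Mc then 1 else 0))
     * ((wv w j)%:R * Y (edge v j) / probW1 p k cyc j).

Arguments HT {R A} Mt Mc Y v p k cyc.

(* Under the design, the indicators W_1, W_2, ... along a path form a
   two-state Markov chain started at its stationary law P(W = 1) = p/(1+p);
   its transition matrix has second eigenvalue -p, so for j < q
   Cov(W_j, W_q) = -(p/(1+p))^2 (-p)^(q-j-1).  Consecutive edges of a
   component alternate between M^t and M^c, so the signs of the estimator
   multiply to (-1)^(j+q) and the variance of the linear statistic is the
   signed double sum of these covariances.  On a cycle, the two edges at v_1
   lie in different matchings, so k is even; W_1, ..., W_(k-1) follow the path
   design and W_k = (1 - W_1)(1 - W_(k-1)).  All moments are products of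
   transfer matrices, evaluated by a forward recursion. *)

From mathcomp Require Import all_boot all_order all_algebra ring zify.
Import Order.TTheory GRing.Theory Num.Theory.
Local Open Scope ring_scope.
Set Implicit Arguments. Unset Strict Implicit.

Section SnocAssignment.
Variable k : nat.
Implicit Types (w : {ffun 'I_k -> bool}) (b : bool).

Definition snoc_ffun w b : {ffun 'I_k.+1 -> bool} :=
  [ffun i : 'I_k.+1 => if insub (val i) is Some j then w j else b].

Lemma wv_snoc w b j : wv (snoc_ffun w b) j = if j.-1 == k then b else wv w j.
Proof.
rewrite /wv; case: insubP => [i lt_jk1 def_i | ge_jk1] /=.
  rewrite ffunE; case: insubP => [i' lt_jk def_i' | ge_jk] /=.
    rewrite def_i in lt_jk; rewrite (ltn_eqF lt_jk).
    case: insubP => [i2 _ def_i2|]; last by rewrite lt_jk.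
    by congr (w _); apply: val_inj; rewrite def_i2 def_i' def_i.
  rewrite def_i in ge_jk; have := ltn_ord i; rewrite def_i ltnS => le_jk.
  by rewrite (_ : j.-1 = k) ?eqxx //; apply/eqP; rewrite eqn_leq le_jk leqNgt.
rewrite ltnS -ltnNge in ge_jk1; rewrite gtn_eqF //.
by case: insubP => // i2; rewrite (leq_gtF (ltnW ge_jk1)).
Qed.

Lemma wv_snoc_last w b : wv (snoc_ffun w b) k.+1 = b.
Proof. by rewrite wv_snoc eqxx. Qed.

Lemma wv_snoc_lt w b j : (0 < j <= k)%N -> wv (snoc_ffun w b) j = wv w j.
Proof. by move=> jk; rewrite wv_snoc ifN //; apply/eqP; lia. Qed.

Lemma sum_ffun_snoc (V : nmodType) (F : {ffun 'I_k.+1 -> bool} -> V) :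
  \sum_w' F w' = \sum_w \sum_b F (snoc_ffun w b).
Proof.
rewrite pair_big /= (reindex (fun x => snoc_ffun x.1 x.2)) //=.
exists (fun w' : {ffun 'I_k.+1 -> bool} =>
  ([ffun i : 'I_k => w' (widen_ord (leqnSn k) i)], w' ord_max)).
  move=> [w b] _ /=; congr pair.
    apply/ffunP => i; rewrite !ffunE; case: insubP => [j _ def_j|] /=.
      by congr (w _); apply: val_inj.
    by rewrite ltn_ord.
  by rewrite ffunE; case: insubP => //= j; rewrite ltnn.
move=> w' _ /=; apply/ffunP => i; rewrite !ffunE; case: insubP => [j _ def_j|] /=.
  by rewrite ffunE; congr (w' _); apply: val_inj.
rewrite -ltnNge => ge_ik; congr (w' _); apply: val_inj => /=.
by apply/eqP; rewrite eqn_leq -ltnS ge_ik -ltnS ltn_ord.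
Qed.

End SnocAssignment.

Section DoubleSums.
Variable R : comRingType.
Implicit Type F : nat -> nat -> R.

Lemma double_sum_recr a n F : (a <= n)%N -> (forall j, F j n = F n j) ->
  \sum_(a <= j < n.+1) \sum_(a <= q < n.+1) F j q =
  \sum_(a <= j < n) \sum_(a <= q < n) F j q + F n n + 2 * \sum_(a <= j < n) F j n.
Proof.
move=> le_an F_sym; rewrite big_nat_recr //= big_nat_recr //=.
rewrite (eq_bigr (fun j => \sum_(a <= q < n) F j q + F j n)) => [|j _]; last first.
  by rewrite big_nat_recr.
rewrite big_split /= (eq_bigr (fun q => F q n) (fun q _ => esym (F_sym q))).
ring.
Qed.

Lemma double_sum_sym a n F : (forall j q, F j q = F q j) ->
  \sum_(a <= j < n) \sum_(a <= q < n) F j q =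
  \sum_(a <= j < n) F j j + 2 * \sum_(a <= j < n) \sum_(j.+1 <= q < n) F j q.
Proof.
move=> F_sym; elim: n => [|n IH]; first by rewrite !big_geq // mulr0 addr0.
have [le_an|lt_na] := leqP a n; last by rewrite !big_geq // mulr0 addr0.
rewrite double_sum_recr // IH big_nat_recr //= (big_nat_recr n) //=.
rewrite (big_geq (m := n.+1)) // addr0.
have -> : \sum_(a <= j < n) \sum_(j.+1 <= q < n.+1) F j q =
          \sum_(a <= j < n) \sum_(j.+1 <= q < n) F j q + \sum_(a <= j < n) F j n.
  by rewrite -big_split; apply: eq_big_nat => j /andP[_ lt_jn]; rewrite big_nat_recr.
ring.
Qed.

End DoubleSums.

Section Moments.
Variable R : realFieldType.
Variable p : R.
Variables (k : nat) (cyc : bool).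
Implicit Types X : {ffun 'I_k -> bool} -> R.

Lemma eq_Expect X X' : X =1 X' -> Expect p k cyc X = Expect p k cyc X'.
Proof. by move=> eqX; apply: eq_bigr => w _; rewrite eqX. Qed.

Lemma Expect_sum (I : Type) (r : seq I) (X : I -> {ffun 'I_k -> bool} -> R) :
  Expect p k cyc (fun w => \sum_(i <- r) X i w) = \sum_(i <- r) Expect p k cyc (X i).
Proof.
rewrite /Expect exchange_big; apply: eq_bigr => w _; exact: mulr_sumr.
Qed.

Lemma ExpectZ a X : Expect p k cyc (fun w => a * X w) = a * Expect p k cyc X.
Proof. by rewrite /Expect mulr_sumr; apply: eq_bigr => w _; rewrite mulrCA. Qed.

Lemma eq_Var X X' : X =1 X' -> Var p k cyc X = Var p k cyc X'.
Proof.
move=> eqX; rewrite /Var (eq_Expect eqX).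
by rewrite (eq_Expect (X := fun w => X w ^+ 2) (X' := fun w => X' w ^+ 2)) // => w; rewrite eqX.
Qed.

Definition Cov j q : R :=
  Expect p k cyc (fun w => (wv w j)%:R * (wv w q)%:R)
  - probW1 p k cyc j * probW1 p k cyc q.

Lemma Cov_sym j q : Cov j q = Cov q j.
Proof.
by rewrite /Cov mulrC; congr (_ - _); apply: eq_Expect => w; rewrite mulrC.
Qed.

Lemma Cov_diag j : Cov j j = probW1 p k cyc j * (1 - probW1 p k cyc j).
Proof.
rewrite /Cov /probW1 (eq_Expect (X' := fun w => (wv w j)%:R)) => [|w]; first by ring.
by case: (wv w j); rewrite ?mulr1 ?mulr0.
Qed.

Lemma Var_lincomb n (c : nat -> R) :
  Var p k cyc (fun w => \sum_(1 <= j < n) c j * (wv w j)%:R) =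
  \sum_(1 <= j < n) \sum_(1 <= q < n) c j * c q * Cov j q.
Proof.
rewrite /Var (eq_Expect (X' := fun w => \sum_(1 <= j < n) \sum_(1 <= q < n)
                                 c j * c q * ((wv w j)%:R * (wv w q)%:R))); last first.
  move=> w; rewrite expr2 mulr_suml; apply: eq_bigr => j _.
  by rewrite mulr_sumr; apply: eq_bigr => q _; ring.
rewrite !Expect_sum expr2 mulr_suml -sumrB; apply: eq_bigr => j _.
rewrite Expect_sum mulr_sumr -sumrB; apply: eq_bigr => q _.
rewrite !ExpectZ /Cov /probW1; ring.
Qed.

End Moments.

Arguments eq_Expect {R p k cyc X} X' _.
Arguments eq_Var {R p k cyc X X'} _.

Section DesignRecursion.
Variable R : realFieldType.
Variable p : R.

Lemma design_pmf_snoc k (w : {ffun 'I_k -> bool}) b : (0 < k)%N ->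
  design_pmf p k.+1 false (snoc_ffun w b) =
  design_pmf p k false w * trans_pr p (wv w k) b.
Proof.
move=> k_gt0; rewrite /design_pmf wv_snoc_lt ?k_gt0 // big_nat_recr //=.
rewrite wv_snoc_last wv_snoc_lt ?k_gt0 ?leqnn // mulrA.
by congr (_ * _ * _); apply: eq_big_nat => j j_in; rewrite !wv_snoc_lt //; lia.
Qed.

Lemma Expect_cycle m (X : {ffun 'I_m.+1 -> bool} -> R) : (0 < m)%N ->
  Expect p m.+1 true X =
  Expect p m false (fun w => X (snoc_ffun w (~~ wv w 1 && ~~ wv w m))).
Proof.
move=> m_gt0; rewrite /Expect sum_ffun_snoc; apply: eq_bigr => w _.
have pmf_snoc b : design_pmf p m.+1 true (snoc_ffun w b) =
    design_pmf p m false w * (b == ~~ wv w 1 && ~~ wv w m)%:R.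
  rewrite /design_pmf /= wv_snoc_lt ?m_gt0 // wv_snoc_last.
  rewrite wv_snoc_lt ?m_gt0 ?leqnn //; congr (_ * _ * _).
    by apply: eq_big_nat => j j_in; rewrite !wv_snoc_lt //; lia.
  by case: eqP.
rewrite big_bool !pmf_snoc.
by case: (~~ wv w 1 && ~~ wv w m); rewrite /= mulr1 mulr0 mul0r ?addr0 ?add0r.
Qed.

End DesignRecursion.

Section ForwardAlgorithm.
Variable R : realFieldType.
Variable p : R.
Hypothesis p1_neq0 : 1 + p != 0.

(* [(forward phi n).b] is the expectation of [\prod_(1 <= j <= n) phi j W_j]
   on the event [W_n = b].  The chain is started at its stationary law,
   so the fictitious transition into [W_1] does not change it. *)
Definition forward_step (f : bool -> R) (x : R * R) : R * R :=
  (f false * (x.1 * (1 - p) + x.2), f true * (x.1 * p)).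

Definition stationary : R * R := (1 / (1 + p), p / (1 + p)).

Fixpoint forward (phi : nat -> bool -> R) n : R * R :=
  if n is n'.+1 then forward_step (phi n) (forward phi n') else stationary.

Lemma expect_prod_last k phi (g : bool -> R) : (0 < k)%N ->
  Expect p k false (fun w => (\prod_(1 <= j < k.+1) phi j (wv w j)) * g (wv w k))
  = (forward phi k).1 * g false + (forward phi k).2 * g true.
Proof.
rewrite /Expect; elim: k g => // -[|k] IH g _.
  rewrite sum_ffun_snoc (eq_bigr (fun _ => \sum_b init_pr p b * (phi 1%N b * g b))).
    by rewrite sumr_const card_ffun card_ord mulr1n big_bool /init_pr /=; field.
  move=> w _; apply: eq_bigr => b _.
  by rewrite /design_pmf big_nat1 big_geq // wv_snoc_last mulr1.
rewrite sum_ffun_snoc.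
pose g' a := \sum_b trans_pr p a b * (phi k.+2 b * g b).
transitivity (\sum_w design_pmf p k.+1 false w *
    (\prod_(1 <= j < k.+2) phi j (wv w j) * g' (wv w k.+1))).
  apply: eq_bigr => w _.
  have snocE b : \prod_(1 <= j < k.+2) phi j (wv (snoc_ffun w b) j) =
                 \prod_(1 <= j < k.+2) phi j (wv w j).
    by apply: eq_big_nat => j j_in; rewrite wv_snoc_lt //; lia.
  rewrite /g' !big_bool !design_pmf_snoc // !(big_nat_recr k.+2) //=.
  rewrite !wv_snoc_last !snocE; ring.
by rewrite IH // /g' !big_bool /= /trans_pr /=; ring.
Qed.

Lemma expect_prod k phi : (0 < k)%N ->
  Expect p k false (fun w => \prod_(1 <= j < k.+1) phi j (wv w j))
  = (forward phi k).1 + (forward phi k).2.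
Proof.
move=> k_gt0; have := expect_prod_last phi (fun _ => 1) k_gt0.
rewrite !mulr1 => <-; by apply: eq_bigr => w _; rewrite mulr1.
Qed.

Definition pi1 : R := p / (1 + p).

(* [n] unconstrained transitions: the transition matrix has eigenvalues [1]
   and [-p], with eigenvector [stationary] for [1]. *)
Definition free_steps n (x : R * R) : R * R :=
  let s := x.1 + x.2 in
  let a := pi1 * s + (x.2 - pi1 * s) * (- p) ^+ n in (s - a, a).

Lemma free_steps_mass n x : (free_steps n x).1 + (free_steps n x).2 = x.1 + x.2.
Proof. by rewrite /free_steps /=; ring. Qed.

Lemma free_steps_stationary n : free_steps n stationary = stationary.
Proof. by rewrite /free_steps /stationary /pi1 /=; congr pair; field. Qed.

Lemma forward_free phi l m : (l <= m)%N ->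
  (forall i b, (l < i <= m)%N -> phi i b = 1) ->
  forward phi m = free_steps (m - l) (forward phi l).
Proof.
move=> /subnKC <-; rewrite addKn; elim: (m - l)%N => [|n IH] free.
  by rewrite addn0 /free_steps /=; case: (forward phi l) => x y /=; congr pair; ring.
rewrite addnS /= IH => [|i b i_in]; last by apply: free; lia.
have phiE : phi (l + n).+1 =1 (fun _ => 1) by move=> b; apply: free; lia.
rewrite /forward_step !phiE /free_steps /pi1 /= exprS.
by case: (forward phi l) => x y /=; congr pair; field.
Qed.

Lemma forward_mark phi f l m : phi m =1 f -> (l < m)%N ->
  (forall i b, (l < i < m)%N -> phi i b = 1) ->
  forward phi m = forward_step f (free_steps (m.-1 - l) (forward phi l)).
Proof.
case: m => // m phi_m lt_lm free.
rewrite /= -forward_free => [|//|i b i_in]; last by apply: free; lia.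
by rewrite /forward_step !phi_m.
Qed.

Lemma forward_first phi f m : phi m =1 f -> (0 < m)%N ->
  (forall i b, (0 < i < m)%N -> phi i b = 1) ->
  forward phi m = forward_step f stationary.
Proof.
by move=> phi_m m_gt0 free; rewrite (forward_mark phi_m m_gt0 free) free_steps_stationary.
Qed.

Lemma forward_last_free phi l m : (l <= m)%N ->
  (forall i b, (l < i <= m)%N -> phi i b = 1) ->
  (forward phi m).1 + (forward phi m).2 = (forward phi l).1 + (forward phi l).2.
Proof. by move=> le_lm free; rewrite (forward_free le_lm free) free_steps_mass. Qed.

Local Notation ind := (fun b : bool => b%:R).
Local Notation nind := (fun b : bool => (~~ b)%:R).

Definition mark (a : nat) (f : bool -> R) (i : nat) (b : bool) : R :=
  if i == a then f b else 1.

Lemma mark_on a f : mark a f a =1 f.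
Proof. by move=> b; rewrite /mark eqxx. Qed.

Lemma mark_off a f i b : i != a -> mark a f i b = 1.
Proof. by rewrite /mark => /negbTE ->. Qed.

Lemma prod_mark k (w : {ffun 'I_k -> bool}) a f : (0 < a <= k)%N ->
  \prod_(1 <= i < k.+1) mark a f i (wv w i) = f (wv w a).
Proof. by move=> a_in; rewrite /mark -big_mkcond big_nat1_eq ifT //; lia. Qed.

Lemma path_expect_W k j : (0 < j <= k)%N ->
  Expect p k false (fun w => (wv w j)%:R) = pi1.
Proof.
move=> j_in; pose phi := mark j ind.
have free i b : i != j -> phi i b = 1 by apply: mark_off.
rewrite (eq_Expect (fun w => \prod_(1 <= i < k.+1) phi i (wv w i))); last first.
  by move=> w; rewrite prod_mark.
rewrite expect_prod; last by lia.
rewrite (forward_last_free (l := j)) => [||i b i_in]; [|lia|apply: free; apply/eqP; lia].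
rewrite (forward_first (mark_on j ind)) => [||i b i_in]; [|lia|apply: free; apply/eqP; lia].
by rewrite /pi1 /=; field.
Qed.

Lemma path_expect_WW k j q : (0 < j)%N -> (j < q <= k)%N ->
  Expect p k false (fun w => (wv w j)%:R * (wv w q)%:R) =
  pi1 ^+ 2 * (1 - (- p) ^+ (q.-1 - j)).
Proof.
move=> j_gt0 jqk; pose phi i b := mark j ind i b * mark q ind i b.
have free i b : i != j -> i != q -> phi i b = 1.
  by move=> ij iq; rewrite /phi !mark_off ?mulr1.
have phi_j : phi j =1 ind by move=> b; rewrite /phi mark_on mark_off ?mulr1 //; lia.
have phi_q : phi q =1 ind by move=> b; rewrite /phi mark_on mark_off ?mul1r //; lia.
rewrite (eq_Expect (fun w => \prod_(1 <= i < k.+1) phi i (wv w i))); last first.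
  by move=> w; rewrite big_split /= !prod_mark //; lia.
rewrite expect_prod; last by lia.
rewrite (forward_last_free (l := q)) => [||i b i_in]; [|lia|apply: free; apply/eqP; lia].
rewrite (forward_mark (l := j) phi_q) => [||i b i_in]; [|lia|apply: free; apply/eqP; lia].
rewrite (forward_first phi_j) => [||i b i_in]; [|lia|apply: free; apply/eqP; lia].
by rewrite /free_steps /forward_step /pi1 /=; field.
Qed.

Lemma path_expect_ends0 m : (1 < m)%N ->
  Expect p m false (fun w => (~~ wv w 1)%:R * (~~ wv w m)%:R) =
  (1 - p ^+ 2 * (- p) ^+ (m - 2)) / (1 + p) ^+ 2.
Proof.
move=> m_gt1; pose phi i b := mark 1 nind i b * mark m nind i b.
have free i b : i != 1%N -> i != m -> phi i b = 1.
  by move=> i1 im; rewrite /phi !mark_off ?mulr1.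
have phi_1 : phi 1%N =1 nind by move=> b; rewrite /phi mark_on mark_off ?mulr1 //; lia.
have phi_m : phi m =1 nind by move=> b; rewrite /phi mark_on mark_off ?mul1r //; lia.
rewrite (eq_Expect (fun w => \prod_(1 <= i < m.+1) phi i (wv w i))); last first.
  by move=> w; rewrite big_split /= !prod_mark //; lia.
rewrite expect_prod; last by lia.
rewrite (forward_mark (l := 1) phi_m) => [||i b i_in]; [|lia|apply: free; apply/eqP; lia].
rewrite (forward_first phi_1) => [||i b i_in]; [|lia|lia].
by rewrite (_ : m.-1 - 1 = m - 2)%N; [rewrite /free_steps /forward_step /pi1 /=; field|lia].
Qed.

Lemma path_expect_W_ends0 m j : (1 < m)%N -> (0 < j <= m)%N ->
  Expect p m false (fun w => (wv w j)%:R * ((~~ wv w 1)%:R * (~~ wv w m)%:R)) =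
  p / (1 + p) ^+ 3 * (1 - (- p) ^+ (m - j)) * (1 - (- p) ^+ (j - 1)).
Proof.
move=> m_gt1 j_in.
have [j1|j_gt1] := leqP j 1.
  rewrite (_ : j = 1%N) ?subnn ?expr0 ?subrr ?mulr0; last by lia.
  rewrite (eq_Expect (fun => 0)); first by rewrite /Expect big1 // => w; rewrite mulr0.
  by move=> w; case: (wv w 1); rewrite /= ?mul0r ?mulr0.
have [jm|j_ltm] := leqP m j.
  rewrite (_ : j = m) ?subnn ?expr0 ?subrr ?mulr0 ?mul0r; last by lia.
  rewrite (eq_Expect (fun => 0)); first by rewrite /Expect big1 // => w; rewrite mulr0.
  by move=> w; case: (wv w m); rewrite /= ?mul0r ?mulr0.
pose phi i b := mark 1 nind i b * mark j ind i b * mark m nind i b.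
have free i b : i != 1%N -> i != j -> i != m -> phi i b = 1.
  by move=> i1 ij im; rewrite /phi !mark_off ?mulr1.
have phi_1 : phi 1%N =1 nind by move=> b; rewrite /phi mark_on !mark_off ?mulr1 //; lia.
have phi_j : phi j =1 ind by move=> b; rewrite /phi mark_on !mark_off ?mulr1 ?mul1r //; lia.
have phi_m : phi m =1 nind by move=> b; rewrite /phi mark_on !mark_off ?mul1r //; lia.
rewrite (eq_Expect (fun w => \prod_(1 <= i < m.+1) phi i (wv w i))); last first.
  by move=> w; rewrite !big_split /= !prod_mark //; [ring|lia..].
rewrite expect_prod; last by lia.
rewrite (forward_mark (l := j) phi_m) => [||i b i_in]; [|lia|apply: free; apply/eqP; lia].
rewrite (forward_mark (l := 1) phi_j) => [||i b i_in]; [|lia|apply: free; apply/eqP; lia].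
rewrite (forward_first phi_1) => [||i b i_in]; [|lia|lia].
have -> : (m - j = (m.-1 - j).+1)%N by lia.
have -> : (j - 1 = (j.-1 - 1).+1)%N by lia.
by rewrite /free_steps /forward_step /pi1 /= !exprS; field.
Qed.

End ForwardAlgorithm.

Lemma matching_eq (A : finType) (M : {set {set A}}) e f x :
  is_matching M -> e \in M -> f \in M -> x \in e -> x \in f -> e = f.
Proof.
case=> _ disjM eM fM xe xf; apply/eqP; apply: contraTT isT => neq_ef.
by have /disjoint_setI0/setP/(_ x) := disjM e f eM fM neq_ef; rewrite !inE xe xf.
Qed.

Section AlternatingSigns.
Variables (A : finType) (Mt Mc : {set {set A}}) (k : nat) (v : nat -> A).
Hypothesis comp : alt_component Mt Mc k v.

Lemma disagree_Mc e : e \in disagree Mt Mc -> (e \in Mc) = (e \notin Mt).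
Proof. by rewrite !inE; case: (e \in Mt); case: (e \in Mc). Qed.

Lemma edge_in_Mt j : (0 < j <= k)%N ->
  (edge v j \in Mt) = (edge v 1 \in Mt) (+) ~~ odd j.
Proof.
have [_ disag alt _ _] := comp; elim: j => [|[|j] IH j_in] //; first by rewrite addbF.
rewrite -[edge v j.+2 \in Mt]negbK -disagree_Mc ?disag //.
by rewrite -alt ?IH; [rewrite /= negbK addbN | lia..].
Qed.

Definition edge_sign (R : ringType) j : R :=
  (if edge v j \in disagree Mt Mc :&: Mt then 1 else 0)
  - (if edge v j \in disagree Mt Mc :&: Mc then 1 else 0).

Lemma edge_signM (R : ringType) j q : (0 < j <= k)%N -> (0 < q <= k)%N ->
  edge_sign R j * edge_sign R q = (-1) ^+ (j + q).
Proof.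
have [_ disag _ _ _] := comp.
have signE i : (0 < i <= k)%N ->
    edge_sign R i = (-1) ^+ ((edge v 1 \in Mt) (+) odd i).
  move=> i_in; rewrite /edge_sign !in_setI (disag i i_in).
  rewrite (disagree_Mc (disag i i_in)) (edge_in_Mt i_in).
  by case: (edge v 1 \in Mt); case: (odd i); rewrite /= ?subr0 ?sub0r ?expr1.
by move=> j_in q_in; rewrite !signE // -signr_addb addbACA addbb /= -oddD signr_odd.
Qed.

Lemma edge_sign_sqr (R : ringType) j : (0 < j <= k)%N -> edge_sign R j * edge_sign R j = 1.
Proof. by move=> j_in; rewrite edge_signM // -signr_odd oddD addbb. Qed.

Hypotheses (matchMt : is_matching Mt) (matchMc : is_matching Mc).
Hypothesis closed : v k.+1 = v 1.

Lemma alt_cycle_gt2 : (2 < k)%N.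
Proof.
have [k_gt0 disag alt inj _] := comp.
have edge_card e : e \in disagree Mt Mc -> #|e| = 2%N.
  by rewrite !inE => /andP[_ /orP[]]; [case: matchMt => + _; apply | case: matchMc => + _; apply].
case: k k_gt0 disag alt inj closed => [|[|[|k']]] // _ disag alt inj closed'.
  by have := edge_card _ (disag 1%N isT); rewrite /edge closed' setUid cards1.
have edge21 : edge v 2 = edge v 1 by rewrite /edge closed' setUC.
have := alt 1%N isT; rewrite -edge21 (disagree_Mc (disag 2 isT)).
by case: (edge v 2 \in Mt).
Qed.

Lemma alt_cycle_even : ~~ odd k.
Proof.
have [_ disag _ inj _] := comp; have k_gt2 := alt_cycle_gt2.
have edge1k : edge v 1 != edge v k.
  apply: contraTneq isT => edge1k.
  have : v 2 \in edge v k by rewrite -edge1k !inE eqxx orbT.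
  rewrite !inE => /orP[] /eqP v2E; first by have [] := inj 2 k isT k_gt2 (leqnSn _) v2E.
  rewrite closed in v2E; have [_] := inj 1 2 isT isT (ltnW (ltnW k_gt2)) (esym v2E).
  by lia.
apply: contra edge1k => odd_k.
have v1_1 : v 1 \in edge v 1 by rewrite !inE eqxx.
have v1_k : v 1 \in edge v k by rewrite !inE -closed eqxx orbT.
have sameM : (edge v k \in Mt) = (edge v 1 \in Mt) by rewrite edge_in_Mt ?odd_k ?addbF //; lia.
have [in1|out1] := boolP (edge v 1 \in Mt).
  by rewrite (matching_eq matchMt in1 _ v1_1 v1_k) ?sameM.
have disag1 : edge v 1 \in disagree Mt Mc by apply: disag; lia.
have disagk : edge v k \in disagree Mt Mc by apply: disag; lia.
have in1 : edge v 1 \in Mc by rewrite (disagree_Mc disag1).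
have ink : edge v k \in Mc by rewrite (disagree_Mc disagk) sameM.
by rewrite (matching_eq matchMc in1 ink v1_1 v1_k).
Qed.

End AlternatingSigns.

Section HorvitzThompsonVariance.
Variable R : realFieldType.
Variable p : R.
Hypothesis p_gt0 : 0 < p.

Let p_neq0 : p != 0. Proof. exact: lt0r_neq0. Qed.
Let p1_neq0 : 1 + p != 0. Proof. by rewrite lt0r_neq0 // addr_gt0. Qed.
Let pm1_neq0 m : 1 + p ^+ m != 0.
Proof. by rewrite lt0r_neq0 // addr_gt0 // exprn_gt0. Qed.

Local Notation pi1 := (pi1 p).

Lemma HT_lincomb (A : finType) Mt Mc (Y : {set A} -> R) v k cyc w :
  HT Mt Mc Y v p k cyc w = \sum_(1 <= j < k.+1)
    (edge_sign Mt Mc v R j * Y (edge v j) / probW1 p k cyc j) * (wv w j)%:R.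
Proof.
by apply: eq_bigr => j _; rewrite -!mulrA; congr (_ * _); rewrite mulrC -mulrA.
Qed.

Lemma path_Cov_lt k j q : (0 < j)%N -> (j < q <= k)%N ->
  Cov p k false j q = - pi1 ^+ 2 * (- p) ^+ (q.-1 - j).
Proof.
by move=> j_gt0 jqk; rewrite /Cov /probW1 path_expect_WW // !path_expect_W //; [ring | lia..].
Qed.

Lemma path_Cov_sum k (s y : nat -> R) :
  (forall j q, (0 < j <= k)%N -> (0 < q <= k)%N -> s j * s q = (-1) ^+ (j + q)) ->
  \sum_(1 <= j < k.+1) \sum_(1 <= q < k.+1)
     (s j * y j / pi1) * (s q * y q / pi1) * Cov p k false j q
  = p^-1 * (\sum_(1 <= j < k.+1) y j ^+ 2)
    + 2 * \sum_(1 <= j < k.+1) \sum_(j.+1 <= q < k.+1) p ^+ (q - j - 1) * y j * y q.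
Proof.
move=> sM; have sign2 i : (-1) ^+ (i + i) = 1 :> R by rewrite -signr_odd oddD addbb.
rewrite double_sum_sym => [|j q]; last by rewrite Cov_sym; ring.
congr (_ + 2 * _).
  rewrite mulr_sumr; apply: eq_big_nat => j j_in.
  have sjj : s j * s j = 1 by rewrite sM // sign2.
  rewrite Cov_diag /probW1 path_expect_W // (mulrACA (s j * y j)) (mulrACA (s j)) sjj.
  rewrite /pi1; field.
  by rewrite p_neq0 p1_neq0.
apply: eq_big_nat => j j_in; apply: eq_big_nat => q /andP[lt_jq q_le].
have [n def_q] : exists n, q = (j + n).+1 by exists (q - j.+1)%N; lia.
have sjq : s j * s q = - (-1) ^+ n.
  rewrite sM; [|lia|lia].
  by rewrite def_q addnS exprS addnA exprD sign2 mul1r mulN1r.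
rewrite path_Cov_lt; [|lia|lia].
rewrite (mulrACA (s j * y j)) (mulrACA (s j)) sjq (exprNn p) def_q.
have -> : ((j + n).+1.-1 - j = n)%N by lia.
have -> : ((j + n).+1 - j - 1 = n)%N by lia.
have sn2 : (-1) ^+ n * (-1) ^+ n = 1 :> R by rewrite -exprD sign2.
transitivity ((-1) ^+ n * (-1) ^+ n * (p ^+ n * y j * y (j + n).+1)); last first.
  by rewrite sn2 mul1r.
by rewrite /pi1; field; rewrite p_neq0 p1_neq0.
Qed.

Lemma Var_HT_path (A : finType) Mt Mc (Y : {set A} -> R) k v :
  alt_component Mt Mc k v ->
  Var p k false (HT Mt Mc Y v p k false) =
    p^-1 * (\sum_(1 <= j < k.+1) Y (edge v j) ^+ 2)
    + 2 * \sum_(1 <= j < k.+1) \sum_(j.+1 <= q < k.+1)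
            p ^+ (q - j - 1) * Y (edge v j) * Y (edge v q).
Proof.
move=> comp; rewrite (eq_Var (HT_lincomb Mt Mc Y v false)) Var_lincomb.
rewrite -(path_Cov_sum (s := edge_sign Mt Mc v R)) => [|j q]; last exact: edge_signM.
apply: eq_big_nat => j j_in; apply: eq_big_nat => q q_in.
by rewrite /probW1 !path_expect_W //; lia.
Qed.

Lemma cycle_probW1 m j : (0 < j <= m)%N -> probW1 p m.+1 true j = pi1.
Proof.
move=> j_in; rewrite /probW1 Expect_cycle; last by lia.
rewrite (eq_Expect (fun w => (wv w j)%:R)) => [|w]; first by rewrite path_expect_W.
by rewrite wv_snoc_lt.
Qed.

Lemma cycle_probW1_last m : odd m -> (1 < m)%N ->
  probW1 p m.+1 true m.+1 = (1 + p ^+ m) / (1 + p) ^+ 2.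
Proof.
move=> m_odd m_gt1; rewrite /probW1 Expect_cycle; last by lia.
rewrite (eq_Expect (fun w => (~~ wv w 1)%:R * (~~ wv w m)%:R)) => [|w]; last first.
  by rewrite wv_snoc_last -mulnb natrM.
rewrite path_expect_ends0 //.
have odd_m2 : odd (m - 2) by move: m_odd; rewrite -{1}(subnK m_gt1) oddD addbF.
have -> : p ^+ 2 * (- p) ^+ (m - 2) = - p ^+ m.
  by rewrite (exprNn p) -signr_odd odd_m2 expr1 mulN1r mulrN -exprD subnKC.
by rewrite opprK.
Qed.

Lemma cycle_Cov m j q : (0 < j <= m)%N -> (0 < q <= m)%N ->
  Cov p m.+1 true j q = Cov p m false j q.
Proof.
move=> j_in q_in; rewrite /Cov (cycle_probW1 j_in) (cycle_probW1 q_in).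
rewrite /probW1 !path_expect_W // Expect_cycle; last by lia.
by congr (_ - _); apply: eq_Expect => w; rewrite !wv_snoc_lt.
Qed.

Lemma cycle_Cov_last m j : odd m -> (1 < m)%N -> (0 < j <= m)%N ->
  Cov p m.+1 true j m.+1 = pi1 * ((1 + p ^+ m) / (1 + p) ^+ 2) *
    ((1 - (- p) ^+ (m - j)) * (1 - (- p) ^+ (j - 1)) / (1 + p ^+ m) - 1).
Proof.
move=> m_odd m_gt1 j_in.
rewrite /Cov cycle_probW1_last // cycle_probW1 // Expect_cycle; last by lia.
rewrite (eq_Expect (fun w => (wv w j)%:R * ((~~ wv w 1)%:R * (~~ wv w m)%:R))).
  by rewrite path_expect_W_ends0 // /pi1; field; rewrite pm1_neq0 p1_neq0.
by move=> w; rewrite wv_snoc_lt // wv_snoc_last -mulnb natrM.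
Qed.

Lemma Var_HT_cycle (A : finType) Mt Mc (Y : {set A} -> R) k v :
  is_matching Mt -> is_matching Mc -> alt_component Mt Mc k v -> v k.+1 = v 1 ->
  Var p k true (HT Mt Mc Y v p k true) =
    p^-1 * (\sum_(1 <= j < k) Y (edge v j) ^+ 2)
    + 2 * (\sum_(1 <= j < k) \sum_(j.+1 <= q < k)
             p ^+ (q - j - 1) * Y (edge v j) * Y (edge v q))
    + (p ^+ 2 + 2 * p - p ^+ k.-1) / (1 + p ^+ k.-1) * Y (edge v k) ^+ 2
    + 2 * \sum_(1 <= j < k)
            (-1) ^+ j * ((1 - (- p) ^+ (k - 1 - j)) * (1 - (- p) ^+ (j - 1))
                           / (1 + p ^+ k.-1) - 1)
            * Y (edge v j) * Y (edge v k).
Proof.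
move=> matchMt matchMc comp closed.
have k_gt2 := alt_cycle_gt2 comp matchMt matchMc closed.
have k_even := alt_cycle_even comp matchMt matchMc closed.
have [m def_k] : exists m, k = m.+1 by exists k.-1; lia.
subst k; have m_gt1 : (1 < m)%N by [].
have m_odd : odd m by rewrite oddS negbK in k_even.
have k_in : (0 < m.+1 <= m.+1)%N by rewrite leqnn.
have sign i : (0 < i <= m.+1)%N ->
    edge_sign Mt Mc v R i * edge_sign Mt Mc v R m.+1 = (-1) ^+ i.
  move=> i_in; rewrite (edge_signM comp) // exprD.
  by rewrite -(signr_odd _ m.+1) oddS m_odd expr0 mulr1.
rewrite (eq_Var (HT_lincomb Mt Mc Y v true)) Var_lincomb double_sum_recr //; last first.
  by move=> j; rewrite Cov_sym [X in X * _]mulrC.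
rewrite /= subn1 /=; congr (_ + _ + 2 * _).
- rewrite -(path_Cov_sum (s := edge_sign Mt Mc v R) (fun j => Y (edge v j))).
    apply: eq_big_nat => j j_in; apply: eq_big_nat => q q_in.
    by rewrite cycle_Cov ?cycle_probW1 //; lia.
  by move=> j q j_in q_in; apply: (edge_signM comp); lia.
- rewrite Cov_diag cycle_probW1_last // (mulrACA (_ * Y _)).
  rewrite (mulrACA (edge_sign _ _ _ _ _)) (edge_sign_sqr comp _ k_in).
  by field; rewrite pm1_neq0 p1_neq0.
- apply: eq_big_nat => j j_in.
  have j_in' : (0 < j <= m)%N by lia.
  rewrite cycle_Cov_last // cycle_probW1_last // cycle_probW1 //.
  rewrite (mulrACA (_ * Y _)) (mulrACA (edge_sign _ _ _ _ _)) sign; last by lia.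
  by rewrite /pi1; field; rewrite pm1_neq0 p1_neq0 p_neq0.
Qed.

End HorvitzThompsonVariance.

Unset Implicit Arguments.
Set Strict Implicit.

Theorem theorem1 (R : realFieldType) (A : finType) (Mt Mc : {set {set A}})
    (Y : {set A} -> R) (p : R) (k : nat) (v : nat -> A) :
  0 < p -> p < 1 ->
  is_matching Mt -> is_matching Mc ->
  alt_component Mt Mc k v ->
  let y := fun j => Y (edge v j) in
  (v k.+1 != v 1%N ->
     Var p k false (HT Mt Mc Y v p k false) =
       p^-1 * (\sum_(1 <= j < k.+1) y j ^+ 2)
       + 2 * \sum_(1 <= j < k.+1) \sum_(j.+1 <= q < k.+1)
               p ^+ (q - j - 1) * y j * y q) /\
  (v k.+1 = v 1%N ->
     Var p k true (HT Mt Mc Y v p k true) =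
       p^-1 * (\sum_(1 <= j < k) y j ^+ 2)
       + 2 * (\sum_(1 <= j < k) \sum_(j.+1 <= q < k)
               p ^+ (q - j - 1) * y j * y q)
       + (p ^+ 2 + 2 * p - p ^+ k.-1) / (1 + p ^+ k.-1) * y k ^+ 2
       + 2 * \sum_(1 <= j < k)
               (-1) ^+ j
               * ((1 - (- p) ^+ (k - 1 - j)) * (1 - (- p) ^+ (j - 1))
                    / (1 + p ^+ k.-1) - 1)
               * y j * y k).
Proof.
(* [p < 1] only makes the design a probability law; the identities hold for [p > 0]. *)
move=> p_gt0 _ matchMt matchMc comp y; split=> [_ | closed].
  exact: Var_HT_path.
exact: Var_HT_cycle.
Qed.
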